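(* $$\zeta(3)=\frac{4\pi^2}{21}\log\left(\frac{e^{\frac{4G}{\pi}}\,\mathcal C_3\left(\frac14\right)^{16}}{\sqrt2}\right).$$
   Context: $\zeta$ is the Riemann zeta function and $G=\sum_{n\ge0}\frac{(-1)^n}{(2n+1)^2}$ is Catalan's constant. $\mathcal C_3(x)=\prod_{n\ge1,\ n\text{ odd}}\left\{\left(1-\frac{x^2}{(n/2)^2}\right)^{(n/2)^2}e^{x^2}\right\}$ for real $|x|<\tfrac12$ (the order-3 Kurokawa–Koyama multiple cosine function; the product converges to a positive number). *)

From Stdlib Require Import Reals.
From Coquelicot Require Import Coquelicot.
Open Scope R_scope.

Definition zeta3 : R := Series (fun n : nat => / (INR (S n)) ^ 3).

Definition catalan : R := Series (fun n : nat => (-1) ^ n / (INR (2 * n + 1)) ^ 2).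

(* The factor of C_3 indexed by the odd integer n = 2k+1, with a = n/2:
   (1 - x^2/a^2)^(a^2) * e^(x^2)  (real power, the base is > 0 for |x| < 1/2). *)
Definition C3_factor (x : R) (k : nat) : R :=
  let a := INR (2 * k + 1) / 2 in
  Rpower (1 - x ^ 2 / a ^ 2) (a ^ 2) * exp (x ^ 2).

Fixpoint C3_partial (x : R) (N : nat) : R :=
  match N with
  | O => 1
  | S N' => C3_partial x N' * C3_factor x N'
  end.

Definition C3 (x : R) : R := real (Lim_seq (C3_partial x)).

From Stdlib Require Import Reals Lra Lia.
From Coquelicot Require Import Coquelicot.
Open Scope R_scope.

(* Taking logarithms, ln C_3(x) = sum_k [a_k^2 ln (1 - x^2/a_k^2) + x^2] with a_k = (2k+1)/2,
   and integrating the partial fraction expansion PI tan (PI t) = sum_k 8t / ((2k+1)^2 - 4t^2)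
   (obtained from that of the cotangent, itself proved by Herglotz's trick) gives
   ln C_3(x) = - int_0^x t^2 PI tan (PI t) dt.  For x = 1/4 the integral is evaluated with the
   Fourier series tan u = 2 sum_k (-1)^k sin (2(k+1)u), whose remainder contributes O(1/N)
   after one integration by parts.  Grouping the coefficients four by four, their sines and
   cosines become constant and the sum splits into Catalan's series, the alternating harmonic
   series and the odd part of zeta(3):
     int_0^(1/4) t^2 PI tan (PI t) dt = G / (4 PI) - ln 2 / 32 - 21 zeta(3) / (64 PI^2),
   which rearranges to the claimed identity. *)

(* Coquelicot states its equations in [NormedModule.sort R_NormedModule] and the like;
   [ring] and [field] only see them after this conversion. *)
Ltac R_eq := match goal with |- ?a = ?b => change (@eq R a b) end.

(** * Partial sums and limits *)

Fixpoint psum (a : nat -> R) (n : nat) : R :=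
  match n with O => 0 | S k => psum a k + a k end.

Lemma psum_S a n : psum a (S n) = psum a n + a n.
Proof. reflexivity. Qed.

Lemma psum_ext a b n : (forall k, (k < n)%nat -> a k = b k) -> psum a n = psum b n.
Proof.
  induction n as [|n IH]; intros Hab; simpl; auto.
  rewrite IH by (intros; apply Hab; lia). rewrite Hab by lia. reflexivity.
Qed.

Lemma psum_scal c a n : psum (fun k => c * a k) n = c * psum a n.
Proof. induction n as [|n IH]; simpl; [ring | rewrite IH; ring]. Qed.

Lemma psum_plus a b n : psum (fun k => a k + b k) n = psum a n + psum b n.
Proof. induction n as [|n IH]; simpl; [ring | rewrite IH; ring]. Qed.

Lemma psum_opp a n : psum (fun k => - a k) n = - psum a n.
Proof. induction n as [|n IH]; simpl; [ring | rewrite IH; ring]. Qed.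

Lemma psum_shift a n : psum a (S n) = a O + psum (fun m => a (S m)) n.
Proof. induction n as [|n IH]; [simpl; ring | rewrite psum_S, IH; simpl; ring]. Qed.

Lemma psum_add a m n : psum a (m + n) = psum a m + psum (fun i => a (m + i)%nat) n.
Proof.
  induction n as [|n IH]; simpl; [rewrite Nat.add_0_r; ring|].
  rewrite <- plus_n_Sm, psum_S, IH. ring.
Qed.

Lemma psum_blocks a k M :
  psum a (k * M) = psum (fun j => psum (fun i => a (k * j + i)%nat) k) M.
Proof.
  induction M as [|M IH]; [rewrite Nat.mul_0_r; reflexivity|].
  rewrite Nat.mul_succ_r, psum_add, IH. reflexivity.
Qed.

Lemma is_series_psum a (l : R) : is_series a l <-> is_lim_seq (psum a) l.
Proof.
  assert (E : forall n, sum_n a n = psum a (S n)).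
  { induction n as [|n IH]; [rewrite sum_O; simpl; rewrite Rplus_0_l; reflexivity|].
    rewrite sum_Sn, IH. reflexivity. }
  unfold is_series. split; intros H.
  - apply is_lim_seq_incr_1, (is_lim_seq_ext (sum_n a)); [exact E | exact H].
  - apply is_lim_seq_incr_1 in H.
    apply (is_lim_seq_ext _ (sum_n a)) in H; [exact H | intros; symmetry; apply E].
Qed.

Lemma is_lim_seq_unique_R u (a b : R) : is_lim_seq u a -> is_lim_seq u b -> a = b.
Proof.
  intros Ha Hb. apply is_lim_seq_unique in Ha, Hb. rewrite Ha in Hb. now injection Hb.
Qed.

Lemma INR_succ_pos n : 0 < INR n + 1.
Proof. pose proof (pos_INR n). lra. Qed.

Lemma is_lim_seq_div_succ C : is_lim_seq (fun n => C / (INR n + 1)) 0.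
Proof.
  replace (Finite 0) with (Rbar_mult C (Rbar_inv p_infty)) by (simpl; f_equal; ring).
  apply is_lim_seq_scal_l, is_lim_seq_inv; [|discriminate].
  eapply is_lim_seq_plus; [apply is_lim_seq_INR | apply is_lim_seq_const | reflexivity].
Qed.

Lemma is_lim_seq_of_dist_le u (l C : R) :
  (forall n, Rabs (l - u n) <= C / (INR n + 1)) -> is_lim_seq u l.
Proof.
  intros Hd. apply (is_lim_seq_ext (fun n => l - (l - u n))); [intros; ring|].
  replace (Finite l) with (Finite (l - 0)) by (f_equal; ring).
  apply is_lim_seq_minus'; [apply is_lim_seq_const|].
  apply (is_lim_seq_le_le (fun n => - (C / (INR n + 1))) _ (fun n => C / (INR n + 1))).
  - intros n. specialize (Hd n). apply Rabs_le_between in Hd. lra.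
  - replace (Finite 0) with (Rbar_opp 0) by (simpl; f_equal; ring).
    apply -> is_lim_seq_opp. apply is_lim_seq_div_succ.
  - apply is_lim_seq_div_succ.
Qed.

Lemma is_lim_seq_psum_mul a (l : R) k : (0 < k)%nat ->
  is_lim_seq (psum a) l -> is_lim_seq (fun M => psum a (k * M)) l.
Proof.
  intros Hk. apply is_lim_seq_subseq.
  intros P [N HN]. exists N. intros n Hn. apply HN. nia.
Qed.

(* Summable with tails at most [C / (N+1)], by comparison with the telescoping series
   [sum_m C / ((m+1)(m+2)) = C]. *)
Definition bounded_by_inv_sq (C : R) (a : nat -> R) : Prop :=
  forall m, Rabs (a m) * ((INR m + 1) * (INR m + 2)) <= C.

Section InvSqBounded.

Variables (C : R) (a : nat -> R).
Hypothesis Ha : bounded_by_inv_sq C a.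

Lemma bounded_by_inv_sq_tele m : Rabs (a m) <= C * (/ (INR m + 1) - / (INR m + 2)).
Proof.
  pose proof (INR_succ_pos m). specialize (Ha m).
  replace (C * (/ (INR m + 1) - / (INR m + 2))) with (C / ((INR m + 1) * (INR m + 2)))
    by (field; lra).
  apply Rle_div_r; nra.
Qed.

Lemma psum_telescope n :
  psum (fun m => C * (/ (INR m + 1) - / (INR m + 2))) n = C - C / (INR n + 1).
Proof.
  induction n as [|n IH]; [simpl; field|].
  rewrite psum_S, IH, S_INR. pose proof (pos_INR n). field. lra.
Qed.

Lemma is_lim_seq_psum_bounded_by_inv_sq : is_lim_seq (psum a) (Series a).
Proof.
  apply is_series_psum, Series_correct.
  apply (ex_series_le a (fun m => C * (/ (INR m + 1) - / (INR m + 2)))).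
  - intros m. apply bounded_by_inv_sq_tele.
  - exists C. apply is_series_psum.
    apply (is_lim_seq_ext (fun n => C - C / (INR n + 1))).
    { intros n. symmetry. apply psum_telescope. }
    replace (Finite C) with (Finite (C - 0)) by (f_equal; ring).
    apply is_lim_seq_minus'; [apply is_lim_seq_const | apply is_lim_seq_div_succ].
Qed.

Lemma psum_dist_bounded_by_inv_sq N d :
  Rabs (psum a (N + d) - psum a N) <= C * (/ (INR N + 1) - / (INR (N + d) + 1)).
Proof.
  induction d as [|d IH].
  - rewrite Nat.add_0_r, Rminus_diag, Rabs_R0. lra.
  - rewrite <- plus_n_Sm, psum_S.
    replace (psum a (N + d) + a (N + d)%nat - psum a N)
      with (psum a (N + d) - psum a N + a (N + d)%nat) by ring.
    eapply Rle_trans; [apply Rabs_triang|].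
    eapply Rle_trans; [apply Rplus_le_compat; [apply IH | apply bounded_by_inv_sq_tele]|].
    rewrite S_INR. replace (INR (N + d) + 1 + 1) with (INR (N + d) + 2) by ring. right. ring.
Qed.

Lemma psum_tail_bounded_by_inv_sq (l : R) : is_lim_seq (psum a) l ->
  forall N, Rabs (l - psum a N) <= C / (INR N + 1).
Proof.
  intros Hl N.
  assert (HC : 0 <= C) by (specialize (Ha O); pose proof (Rabs_pos (a O)); simpl in Ha; nra).
  assert (Hlim : is_lim_seq (fun d => Rabs (psum a (d + N) - psum a N)) (Rabs (l - psum a N))).
  { apply (is_lim_seq_abs _ (l - psum a N)), is_lim_seq_minus';
      [apply is_lim_seq_incr_n, Hl | apply is_lim_seq_const]. }
  refine (is_lim_seq_le _ _ _ _ _ Hlim (is_lim_seq_const _)).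
  intros d. rewrite Nat.add_comm.
  eapply Rle_trans; [apply psum_dist_bounded_by_inv_sq|].
  pose proof (Rinv_0_lt_compat _ (INR_succ_pos (N + d))).
  unfold Rdiv. nra.
Qed.

End InvSqBounded.

Lemma Rabs_div_mult_le x y P C :
  0 < y -> Rabs x * P <= C * y -> Rabs (x / y) * P <= C.
Proof.
  intros Hy H. unfold Rdiv. rewrite Rabs_mult, Rabs_inv, (Rabs_pos_eq y) by lra.
  replace (Rabs x * / y * P) with (Rabs x * P / y) by (field; lra).
  apply Rle_div_l; lra.
Qed.

(** * The partial fraction expansion of the cotangent *)

Lemma PI_gt_3 : 3 < PI.
Proof. pose proof PI2_3_2. lra. Qed.

Ltac eval_fact :=
  rewrite ?INR_IZR_INZ;
  repeat match goal with
  | |- context [Z.of_nat (Factorial.fact ?n)] =>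
      let v := eval vm_compute in (Z.of_nat (Factorial.fact n)) in
      change (Z.of_nat (Factorial.fact n)) with v
  end.

Lemma sin_lb_eq x : sin_lb x = x - x^3/6 + x^5/120 - x^7/5040.
Proof.
  unfold sin_lb, sin_approx, sin_term. cbn [sum_f_R0 Nat.mul Nat.add]. eval_fact. field.
Qed.

Lemma sin_ub_eq x : sin_ub x = x - x^3/6 + x^5/120 - x^7/5040 + x^9/362880.
Proof.
  unfold sin_ub, sin_approx, sin_term. cbn [sum_f_R0 Nat.mul Nat.add]. eval_fact. field.
Qed.

Lemma cos_lb_eq x : cos_lb x = 1 - x^2/2 + x^4/24 - x^6/720.
Proof.
  unfold cos_lb, cos_approx, cos_term. cbn [sum_f_R0 Nat.mul Nat.add]. eval_fact. field.
Qed.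

Lemma cos_ub_eq x : cos_ub x = 1 - x^2/2 + x^4/24 - x^6/720 + x^8/40320.
Proof.
  unfold cos_ub, cos_approx, cos_term. cbn [sum_f_R0 Nat.mul Nat.add]. eval_fact. field.
Qed.

Lemma sin_cos_taylor_bounds x : 0 <= x <= 1 ->
  5 * x / 6 <= sin x /\ Rabs (x * cos x - sin x) <= x ^ 3 / 2.
Proof.
  intros Hx. pose proof PI_gt_3.
  destruct (SIN x) as [Hs1 Hs2]; try lra. destruct (COS x) as [Hc1 Hc2]; try lra.
  rewrite sin_lb_eq in Hs1. rewrite sin_ub_eq in Hs2.
  rewrite cos_lb_eq in Hc1. rewrite cos_ub_eq in Hc2.
  assert (x ^ 2 <= 1) by nra.
  assert (x ^ 3 <= x ^ 2) by (simpl; nra).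
  assert (0 <= x ^ 3) by (simpl; nra).
  assert (x ^ 5 <= x ^ 3) by (replace (x ^ 5) with (x ^ 3 * x ^ 2) by ring; nra).
  assert (0 <= x ^ 5) by (replace (x ^ 5) with (x ^ 3 * x ^ 2) by ring; nra).
  assert (x ^ 7 <= x ^ 5) by (replace (x ^ 7) with (x ^ 5 * x ^ 2) by ring; nra).
  assert (0 <= x ^ 7) by (replace (x ^ 7) with (x ^ 5 * x ^ 2) by ring; nra).
  assert (x ^ 9 <= x ^ 7) by (replace (x ^ 9) with (x ^ 7 * x ^ 2) by ring; nra).
  assert (0 <= x ^ 9) by (replace (x ^ 9) with (x ^ 7 * x ^ 2) by ring; nra).
  split; [nra|]. apply Rabs_le. split.
  - assert (Hl : x * cos x >= x * (1 - x^2/2 + x^4/24 - x^6/720)) by nra.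
    replace (x * (1 - x^2/2 + x^4/24 - x^6/720)) with (x - x^3/2 + x^5/24 - x^7/720) in Hl
      by field.
    nra.
  - assert (Hu : x * cos x <= x * (1 - x^2/2 + x^4/24 - x^6/720 + x^8/40320)) by nra.
    replace (x * (1 - x^2/2 + x^4/24 - x^6/720 + x^8/40320))
      with (x - x^3/2 + x^5/24 - x^7/720 + x^9/40320) in Hu by field.
    nra.
Qed.

Definition cotPI (s : R) : R := PI * cos (PI * s) / sin (PI * s).

(* At [y = 0] both terms vanish ([/ 0 = 0]), which is the continuous extension. *)
Definition cotPI_reg (y : R) : R := cotPI y - / y.

Lemma cotPI_reg_0 : cotPI_reg 0 = 0.
Proof. unfold cotPI_reg, cotPI. rewrite Rmult_0_r, sin_0, Rinv_0. unfold Rdiv. rewrite Rinv_0. ring. Qed.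

Lemma cotPI_reg_opp y : cotPI_reg (- y) = - cotPI_reg y.
Proof.
  unfold cotPI_reg, cotPI. replace (PI * - y) with (- (PI * y)) by ring.
  rewrite sin_neg, cos_neg. unfold Rdiv. rewrite !Rinv_opp. ring.
Qed.

Lemma cotPI_reg_small y : 0 < y <= 1/4 -> Rabs (cotPI_reg y) <= 10 * y.
Proof.
  intros Hy. pose proof PI_gt_3. pose proof PI_4.
  set (x := PI * y).
  assert (Hx : 0 < x <= 1) by (unfold x; split; nra).
  destruct (sin_cos_taylor_bounds x) as [Hs Hd]; [lra|].
  replace (cotPI_reg y) with (PI * (x * cos x - sin x) / (x * sin x)).
  2:{ assert (sin x <> 0) by lra. unfold cotPI_reg, cotPI, x in *. field. lra. }
  unfold Rdiv. rewrite Rabs_mult, Rabs_mult, (Rabs_pos_eq PI) by lra.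
  rewrite (Rabs_pos_eq (/ (x * sin x))) by (apply Rlt_le, Rinv_0_lt_compat; nra).
  apply (Rmult_le_reg_r (x * sin x)); [nra|].
  rewrite Rmult_assoc, Rmult_assoc, Rinv_l, Rmult_1_r by nra.
  assert (PI * (x ^ 3 / 2) <= 10 * y * (x * (5 * x / 6))).
  { replace (PI * (x ^ 3 / 2)) with (x * x * (PI * x / 2)) by field.
    replace (10 * y * (x * (5 * x / 6))) with (x * x * (25 * y / 3)) by field.
    apply Rmult_le_compat_l; [nra|]. unfold x. assert (PI * PI <= 16) by nra. nra. }
  assert (10 * y * (x * (5 * x / 6)) <= 10 * y * (x * sin x))
    by (apply Rmult_le_compat_l; [lra | apply Rmult_le_compat_l; lra]).
  assert (PI * Rabs (x * cos x - sin x) <= PI * (x ^ 3 / 2)) by (apply Rmult_le_compat_l; lra).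
  lra.
Qed.

Lemma ex_derive_continuity_pt (f : R -> R) x : ex_derive f x -> continuity_pt f x.
Proof.
  intros H. apply continuity_pt_filterlim.
  apply (ex_derive_continuous (K := R_AbsRing) (V := R_NormedModule)), H.
Qed.

Lemma continuity_pt_cotPI_reg_0 : continuity_pt cotPI_reg 0.
Proof.
  unfold continuity_pt, continue_in, limit1_in, limit_in. simpl. unfold R_dist.
  intros eps Heps. exists (Rmin (1/4) (eps / 20)). split; [apply Rmin_pos; lra|].
  intros y [_ Hy]. rewrite cotPI_reg_0, Rminus_0_r in *.
  assert (Hy1 : Rabs y < 1/4) by (eapply Rlt_le_trans; [exact Hy | apply Rmin_l]).
  assert (Hy2 : Rabs y < eps / 20) by (eapply Rlt_le_trans; [exact Hy | apply Rmin_r]).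
  destruct (Rtotal_order y 0) as [Hn | [-> | Hp]].
  - rewrite <- (Ropp_involutive y), cotPI_reg_opp, Rabs_Ropp.
    rewrite Rabs_left in Hy1, Hy2 by lra.
    eapply Rle_lt_trans; [apply cotPI_reg_small|]; lra.
  - rewrite cotPI_reg_0, Rabs_R0. lra.
  - rewrite Rabs_right in Hy1, Hy2 by lra.
    eapply Rle_lt_trans; [apply cotPI_reg_small|]; lra.
Qed.

Lemma sin_PI_mult_neq_0 y : 0 < Rabs y < 1 -> sin (PI * y) <> 0.
Proof.
  intros Hy. pose proof PI_gt_3.
  destruct (Rtotal_order y 0) as [Hn | [-> | Hp]].
  - rewrite Rabs_left in Hy by lra.
    replace (PI * y) with (- (PI * - y)) by ring. rewrite sin_neg.
    assert (0 < sin (PI * - y)) by (apply sin_gt_0; nra). lra.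
  - rewrite Rabs_R0 in Hy. lra.
  - rewrite Rabs_right in Hy by lra.
    assert (0 < sin (PI * y)) by (apply sin_gt_0; nra). lra.
Qed.

Lemma continuity_pt_cotPI_reg y : Rabs y < 1 -> continuity_pt cotPI_reg y.
Proof.
  intros Hy. destruct (Req_dec y 0) as [-> | Hn]; [apply continuity_pt_cotPI_reg_0|].
  apply ex_derive_continuity_pt. unfold cotPI_reg, cotPI. auto_derive.
  split; [apply sin_PI_mult_neq_0; split; [apply Rabs_pos_lt|]; auto | auto].
Qed.

Lemma continuity_pt_of_uniform_approx (f : R -> R) (fN : nat -> R -> R) C a b s0 :
  a < s0 < b -> (forall N s, a < s < b -> Rabs (f s - fN N s) <= C / (INR N + 1)) ->
  (forall N, continuity_pt (fN N) s0) -> continuity_pt f s0.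
Proof.
  intros Hs0 Happrox Hcont.
  unfold continuity_pt, continue_in, limit1_in, limit_in. simpl. unfold R_dist.
  intros eps Heps.
  pose proof (is_lim_seq_div_succ C) as Hsmall. apply is_lim_seq_spec in Hsmall.
  destruct (Hsmall (mkposreal (eps / 3) ltac:(lra))) as [N HN].
  specialize (HN N (le_n _)). simpl in HN. rewrite Rminus_0_r in HN.
  apply Rabs_def2 in HN.
  destruct (Hcont N (eps / 3)) as [d [Hd Hclose]]; [lra|]. simpl in Hclose. unfold R_dist in Hclose.
  exists (Rmin d (Rmin (s0 - a) (b - s0))).
  split; [apply Rmin_pos; [lra | apply Rmin_pos; lra]|].
  intros s [Hns Hsd].
  assert (Hs1 : Rabs (s - s0) < d) by (eapply Rlt_le_trans; [exact Hsd | apply Rmin_l]).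
  assert (Hs2 : Rabs (s - s0) < Rmin (s0 - a) (b - s0))
    by (eapply Rlt_le_trans; [exact Hsd | apply Rmin_r]).
  assert (Hs3 : a < s < b).
  { apply Rabs_def2 in Hs2. pose proof (Rmin_l (s0 - a) (b - s0)).
    pose proof (Rmin_r (s0 - a) (b - s0)). lra. }
  specialize (Hclose s (conj Hns Hs1)).
  pose proof (Happrox N s Hs3) as Hs. pose proof (Happrox N s0 Hs0) as Hs0'.
  replace (f s - f s0) with ((f s - fN N s) + (fN N s - fN N s0) - (f s0 - fN N s0)) by ring.
  revert Hclose Hs Hs0'. generalize (f s - fN N s) (fN N s - fN N s0) (f s0 - fN N s0).
  intros u v w **. unfold Rabs in *. repeat destruct Rcase_abs; lra.
Qed.

Definition cot_tail_term (s : R) (m : nat) : R := / (s + INR m + 1) - / (INR m + 2 - s).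
Definition cot_tail (s : R) : R := Series (cot_tail_term s).

Lemma cot_tail_term_bounded s : -1/2 <= s <= 3/2 -> bounded_by_inv_sq 16 (cot_tail_term s).
Proof.
  intros Hs m. pose proof (pos_INR m) as HM. set (M := INR m) in *.
  assert (HAB : (M + 1/2) * (M + 1/2) <= (s + M + 1) * (M + 2 - s)) by nra.
  unfold cot_tail_term. fold M.
  replace (/ (s + M + 1) - / (M + 2 - s)) with ((1 - 2 * s) / ((s + M + 1) * (M + 2 - s)))
    by (field; lra).
  apply Rabs_div_mult_le; [nra|].
  assert (Rabs (1 - 2 * s) <= 2) by (apply Rabs_le; lra).
  pose proof (Rabs_pos (1 - 2 * s)). nra.
Qed.

Lemma is_lim_seq_cot_tail s : -1/2 <= s <= 3/2 -> is_lim_seq (psum (cot_tail_term s)) (cot_tail s).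
Proof. intros Hs. eapply is_lim_seq_psum_bounded_by_inv_sq, cot_tail_term_bounded, Hs. Qed.

Lemma continuity_pt_cot_tail s : -1/2 < s < 3/2 -> continuity_pt cot_tail s.
Proof.
  intros Hs. apply (continuity_pt_of_uniform_approx _ (fun N s => psum (cot_tail_term s) N) 16
    (-1/2) (3/2)); [exact Hs | |].
  - intros N s' Hs'. eapply psum_tail_bounded_by_inv_sq;
      [apply cot_tail_term_bounded | apply is_lim_seq_cot_tail]; lra.
  - intros N. apply ex_derive_continuity_pt. induction N as [|N IH]; simpl.
    + apply ex_derive_const.
    + apply (ex_derive_plus (fun s => psum (cot_tail_term s) N) (fun s => cot_tail_term s N));
        [exact IH|].
      unfold cot_tail_term. pose proof (pos_INR N). auto_derive. repeat split; lra.
Qed.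

Lemma psum_cot_tail_term_0 N : psum (cot_tail_term 0) N = 1 - / (INR N + 1).
Proof.
  induction N as [|N IH]; [simpl; field|].
  rewrite psum_S, IH. unfold cot_tail_term. rewrite S_INR. pose proof (pos_INR N). field. lra.
Qed.

Lemma psum_cot_tail_term_1 N : psum (cot_tail_term 1) N = - (1 - / (INR N + 1)).
Proof.
  induction N as [|N IH]; [simpl; field|].
  rewrite psum_S, IH. unfold cot_tail_term. rewrite S_INR. pose proof (pos_INR N). field. lra.
Qed.

Lemma is_lim_seq_one_sub_inv_succ : is_lim_seq (fun N => 1 - / (INR N + 1)) 1.
Proof.
  apply (is_lim_seq_ext (fun N => 1 - 1 / (INR N + 1))); [intros; unfold Rdiv; ring|].
  replace (Finite 1) with (Finite (1 - 0)) by (f_equal; ring).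
  apply is_lim_seq_minus'; [apply is_lim_seq_const | apply is_lim_seq_div_succ].
Qed.

Lemma cot_tail_0 : cot_tail 0 = 1.
Proof.
  apply (is_lim_seq_unique_R (psum (cot_tail_term 0))); [apply is_lim_seq_cot_tail; lra|].
  apply (is_lim_seq_ext _ _ _ (fun N => eq_sym (psum_cot_tail_term_0 N))).
  apply is_lim_seq_one_sub_inv_succ.
Qed.

Lemma cot_tail_1 : cot_tail 1 = -1.
Proof.
  apply (is_lim_seq_unique_R (psum (cot_tail_term 1))); [apply is_lim_seq_cot_tail; lra|].
  apply (is_lim_seq_ext _ _ _ (fun N => eq_sym (psum_cot_tail_term_1 N))).
  replace (Finite (-1)) with (Rbar_opp 1) by reflexivity.
  apply -> is_lim_seq_opp. apply is_lim_seq_one_sub_inv_succ.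
Qed.

(* The continuous extension to [0, 1] of [cotPI s - / s + / (1 - s)], by the duplication
   formula [cotPI s = (cotPI (s/2) + cotPI ((s+1)/2)) / 2] (see [cotPI_reg01_eq]). *)
Definition cotPI_reg01 (s : R) : R := / 2 * cotPI_reg (s / 2) + / 2 * cotPI_reg ((s - 1) / 2).

Definition cot_pf_error (s : R) : R := cotPI_reg01 s - cot_tail s.

Lemma continuity_pt_cot_pf_error s : 0 <= s <= 1 -> continuity_pt cot_pf_error s.
Proof.
  intros Hs.
  assert (Hlin : forall c d, Rabs (c * s + d) < 1 ->
    continuity_pt (fun y => cotPI_reg (c * y + d)) s).
  { intros c d Hcd. apply (continuity_pt_comp (fun y => c * y + d) cotPI_reg).
    - apply ex_derive_continuity_pt. auto_derive. auto.
    - apply continuity_pt_cotPI_reg, Hcd. }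
  unfold cot_pf_error, cotPI_reg01.
  apply continuity_pt_minus; [|apply continuity_pt_cot_tail; lra].
  apply continuity_pt_plus; apply continuity_pt_scal.
  - apply (continuity_pt_ext (fun y => cotPI_reg (/ 2 * y + 0))); [intros; f_equal; field|].
    apply Hlin, Rabs_def1; lra.
  - apply (continuity_pt_ext (fun y => cotPI_reg (/ 2 * y + - / 2))); [intros; f_equal; field|].
    apply Hlin, Rabs_def1; lra.
Qed.

Lemma cotPI_half : cotPI (1 / 2) = 0.
Proof. unfold cotPI. replace (PI * (1 / 2)) with (PI / 2) by field. rewrite cos_PI2, sin_PI2. field. Qed.

Lemma cot_pf_error_0 : cot_pf_error 0 = 0.
Proof.
  unfold cot_pf_error, cotPI_reg01. rewrite cot_tail_0.
  replace (0 / 2) with 0 by field. replace ((0 - 1) / 2) with (- (1 / 2)) by field.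
  rewrite cotPI_reg_opp, cotPI_reg_0. unfold cotPI_reg. rewrite cotPI_half. field.
Qed.

Lemma cot_pf_error_1 : cot_pf_error 1 = 0.
Proof.
  unfold cot_pf_error, cotPI_reg01. rewrite cot_tail_1.
  replace ((1 - 1) / 2) with 0 by field. rewrite cotPI_reg_0.
  unfold cotPI_reg. rewrite cotPI_half. field.
Qed.

Definition cot_pf_term (s : R) (m : nat) : R := / (s + INR m) - / (INR m + 1 - s).
Definition cot_pf (s : R) : R := / s - / (1 - s) + cot_tail s.

Lemma is_lim_seq_cot_pf s : 0 < s < 1 -> is_lim_seq (psum (cot_pf_term s)) (cot_pf s).
Proof.
  intros Hs. apply is_lim_seq_incr_1.
  apply (is_lim_seq_ext (fun N => cot_pf_term s O + psum (cot_tail_term s) N)).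
  - intros N. rewrite psum_shift. f_equal. apply psum_ext. intros k _.
    unfold cot_pf_term, cot_tail_term. rewrite S_INR. f_equal; f_equal; ring.
  - unfold cot_pf. apply is_lim_seq_plus'; [|apply is_lim_seq_cot_tail; lra].
    unfold cot_pf_term. simpl. rewrite Rplus_0_r, Rplus_0_l. apply is_lim_seq_const.
Qed.

Lemma cot_pf_duplication s : 0 < s < 1 -> cot_pf (s / 2) + cot_pf ((s + 1) / 2) = 2 * cot_pf s.
Proof.
  intros Hs.
  apply (is_lim_seq_unique_R (fun N => psum (cot_pf_term (s / 2)) N + psum (cot_pf_term ((s + 1) / 2)) N)).
  - apply is_lim_seq_plus'; apply is_lim_seq_cot_pf; lra.
  - apply (is_lim_seq_ext (fun N => 2 * psum (cot_pf_term s) (2 * N))).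
    + intros N. rewrite psum_blocks, <- psum_plus, <- psum_scal. apply psum_ext. intros j _.
      cbn [psum]. unfold cot_pf_term. rewrite !plus_INR, !mult_INR. simpl INR.
      pose proof (pos_INR j). field. repeat split; lra.
    + apply (is_lim_seq_scal_l _ 2 (cot_pf s)), is_lim_seq_psum_mul; [lia|].
      apply is_lim_seq_cot_pf, Hs.
Qed.

Lemma cotPI_duplication s : 0 < s < 1 -> cotPI (s / 2) + cotPI ((s + 1) / 2) = 2 * cotPI s.
Proof.
  intros Hs. pose proof PI_gt_3. unfold cotPI.
  set (a := PI * (s / 2)).
  replace (PI * ((s + 1) / 2)) with (a + PI / 2) by (unfold a; field).
  replace (PI * s) with (2 * a) by (unfold a; field).
  assert (0 < sin a) by (apply sin_gt_0; unfold a; nra).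
  assert (0 < cos a) by (apply cos_gt_0; unfold a; nra).
  rewrite cos_plus, sin_plus, cos_PI2, sin_PI2, sin_2a, cos_2a. field. lra.
Qed.

Lemma cotPI_reg01_eq s : 0 < s < 1 -> cotPI_reg01 s = cotPI s - / s + / (1 - s).
Proof.
  intros Hs. pose proof PI_gt_3.
  assert (Hsin : 0 < sin (PI * (s / 2))) by (apply sin_gt_0; nra).
  assert (Hcos : 0 < cos (PI * (s / 2))) by (apply cos_gt_0; nra).
  assert (E1 : cotPI_reg ((s - 1) / 2) = cotPI ((s + 1) / 2) - 2 / (s - 1)).
  { unfold cotPI_reg, cotPI.
    replace (PI * ((s - 1) / 2)) with (PI * (s / 2) - PI / 2) by field.
    replace (PI * ((s + 1) / 2)) with (PI * (s / 2) + PI / 2) by field.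
    rewrite cos_plus, sin_plus, cos_minus, sin_minus, cos_PI2, sin_PI2.
    field. split; lra. }
  assert (E2 : cotPI_reg (s / 2) = cotPI (s / 2) - 2 / s)
    by (unfold cotPI_reg, cotPI; field; split; lra).
  unfold cotPI_reg01. rewrite E1, E2.
  replace (cotPI s) with ((cotPI (s / 2) + cotPI ((s + 1) / 2)) / 2)
    by (rewrite cotPI_duplication; [field | exact Hs]).
  field. lra.
Qed.

Lemma cot_pf_error_eq s : 0 < s < 1 -> cot_pf_error s = cotPI s - cot_pf s.
Proof. intros Hs. unfold cot_pf_error, cot_pf. rewrite cotPI_reg01_eq by exact Hs. ring. Qed.

Lemma cot_pf_error_duplication s : 0 < s < 1 ->
  cot_pf_error (s / 2) + cot_pf_error ((s + 1) / 2) = 2 * cot_pf_error s.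
Proof.
  intros Hs. rewrite !cot_pf_error_eq by lra.
  pose proof (cotPI_duplication s Hs). pose proof (cot_pf_duplication s Hs). lra.
Qed.

Section Herglotz.

Variable f : R -> R.
Hypothesis f_cont : forall s, 0 <= s <= 1 -> continuity_pt f s.
Hypothesis f_0 : f 0 = 0.
Hypothesis f_1 : f 1 = 0.
Hypothesis f_dup : forall s, 0 < s < 1 -> f (s / 2) + f ((s + 1) / 2) = 2 * f s.

(* At a maximum point x, the duplication identity forces f (x/2) = f x, hence
   f (x / 2^j) = f x for all j; letting j go to infinity gives f x = f 0 = 0. *)
Lemma herglotz_le_0 s : 0 <= s <= 1 -> f s <= 0.
Proof.
  destruct (continuity_ab_maj f 0 1 ltac:(lra) f_cont) as [x [Hmax Hx]].
  assert (Hfx : f x <= 0).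
  { destruct (Req_dec x 0) as [-> | Hx0]; [lra|].
    destruct (Req_dec x 1) as [-> | Hx1]; [lra|].
    assert (Hhalf : forall j, 0 < (/ 2) ^ j <= 1)
      by (induction j as [|j IH]; simpl; lra).
    assert (Hconst : forall j, f (x * (/ 2) ^ j) = f x).
    { induction j as [|j IH]; [rewrite Rmult_1_r; reflexivity|].
      set (t := x * (/ 2) ^ j) in IH.
      assert (Ht : 0 < t < 1) by (specialize (Hhalf j); unfold t; split; nra).
      pose proof (f_dup t Ht).
      assert (f (t / 2) <= f x) by (apply Hmax; lra).
      assert (f ((t + 1) / 2) <= f x) by (apply Hmax; lra).
      replace (x * (/ 2) ^ S j) with (t / 2) by (unfold t; simpl; field). lra. }
    assert (Hlim : is_lim_seq (fun j => f (x * (/ 2) ^ j)) (f 0)).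
    { apply is_lim_seq_continuous; [apply f_cont; lra|].
      replace (Finite 0) with (Rbar_mult x 0) by (simpl; f_equal; ring).
      apply is_lim_seq_scal_l, is_lim_seq_geom. rewrite Rabs_right; lra. }
    rewrite f_0 in Hlim.
    assert (Hlim' : is_lim_seq (fun j => f (x * (/ 2) ^ j)) (f x))
      by (apply (is_lim_seq_ext (fun _ => f x)); [intros; rewrite Hconst; auto | apply is_lim_seq_const]).
    rewrite (is_lim_seq_unique_R _ _ _ Hlim' Hlim). lra. }
  intros Hs. specialize (Hmax s Hs). lra.
Qed.

End Herglotz.

Lemma herglotz_eq_0 (f : R -> R) :
  (forall s, 0 <= s <= 1 -> continuity_pt f s) -> f 0 = 0 -> f 1 = 0 ->
  (forall s, 0 < s < 1 -> f (s / 2) + f ((s + 1) / 2) = 2 * f s) ->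
  forall s, 0 <= s <= 1 -> f s = 0.
Proof.
  intros Hc H0 H1 Hd s Hs.
  pose proof (herglotz_le_0 f Hc H0 H1 Hd s Hs).
  assert (- f s <= 0).
  { apply (herglotz_le_0 (fun x => - f x)); auto.
    - intros; apply continuity_pt_opp; auto.
    - rewrite H0; ring.
    - rewrite H1; ring.
    - intros x Hx. pose proof (Hd x Hx). lra. }
  lra.
Qed.

Lemma cotPI_eq_cot_pf s : 0 < s < 1 -> cotPI s = cot_pf s.
Proof.
  intros Hs.
  pose proof (herglotz_eq_0 cot_pf_error continuity_pt_cot_pf_error cot_pf_error_0
    cot_pf_error_1 cot_pf_error_duplication s ltac:(lra)) as Hzero.
  rewrite cot_pf_error_eq in Hzero by exact Hs. lra.
Qed.

Definition tan_pf_term (t : R) (k : nat) : R := 8 * t / ((2 * INR k + 1) ^ 2 - 4 * t ^ 2).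

(* The expansion of [PI * tan (PI * t) = - cotPI (t + 1/2)], pairing the terms symmetrically. *)
Lemma is_lim_seq_tan_pf t : -1/2 < t < 1/2 -> is_lim_seq (psum (tan_pf_term t)) (PI * tan (PI * t)).
Proof.
  intros Ht. pose proof PI_gt_3.
  set (s := t + 1 / 2).
  assert (Hs : 0 < s < 1) by (unfold s; lra).
  assert (Hcot : cotPI s = - (PI * tan (PI * t))).
  { unfold cotPI, s, tan. replace (PI * (t + 1 / 2)) with (PI * t + PI / 2) by field.
    rewrite cos_plus, sin_plus, cos_PI2, sin_PI2.
    assert (0 < cos (PI * t)) by (apply cos_gt_0; nra). field. lra. }
  apply (is_lim_seq_ext (fun N => - psum (cot_pf_term s) N)).
  - intros N. rewrite <- psum_opp. apply psum_ext. intros k _.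
    unfold cot_pf_term, tan_pf_term, s. pose proof (pos_INR k).
    field. repeat split; try lra. nra.
  - replace (PI * tan (PI * t)) with (- cot_pf s) by (rewrite <- cotPI_eq_cot_pf; lra).
    change (Finite (- cot_pf s)) with (Rbar_opp (cot_pf s)).
    apply -> is_lim_seq_opp. apply is_lim_seq_cot_pf, Hs.
Qed.

(** * [ln C_3(x)] as an integral of [t^2 PI tan (PI t)] *)

Lemma is_RInt_psum (f : R -> nat -> R) (I : nat -> R) a b N :
  (forall k, is_RInt (fun x => f x k) a b (I k)) ->
  is_RInt (fun x => psum (f x) N) a b (psum I N).
Proof.
  intros Hf. induction N as [|N IH]; simpl.
  - pose proof (is_RInt_const (V := R_NormedModule) a b zero) as Hc.
    rewrite (scal_zero_r (V := R_NormedModule)) in Hc. exact Hc.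
  - apply (is_RInt_ext (V := R_NormedModule) (fun x => plus (psum (f x) N) (f x N))).
    { intros. reflexivity. }
    apply (is_RInt_plus (V := R_NormedModule)); [exact IH | apply Hf].
Qed.

Lemma cos_PI_mult_pos t : 0 <= t <= 1/4 -> 0 < cos (PI * t).
Proof. intros Ht. pose proof PI_gt_3. pose proof PI_4. apply cos_gt_0; nra. Qed.

Definition half_odd (k : nat) : R := INR (2 * k + 1) / 2.

Lemma half_odd_eq k : half_odd k = (2 * INR k + 1) / 2.
Proof. unfold half_odd. rewrite plus_INR, mult_INR. simpl. field. Qed.

Lemma half_odd_ge k : 1/2 <= half_odd k.
Proof. rewrite half_odd_eq. pose proof (pos_INR k). lra. Qed.

Definition ln_C3_term (x : R) (k : nat) : R :=
  half_odd k ^ 2 * ln (1 - x ^ 2 / half_odd k ^ 2) + x ^ 2.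

Lemma C3_partial_eq x N : C3_partial x N = exp (psum (ln_C3_term x) N).
Proof.
  induction N as [|N IH]; simpl; [rewrite exp_0; reflexivity|].
  rewrite IH. unfold C3_factor, Rpower, ln_C3_term, half_odd.
  rewrite <- !exp_plus. f_equal; ring.
Qed.

Lemma C3_eq_exp x (l : R) : is_lim_seq (psum (ln_C3_term x)) l -> C3 x = exp l.
Proof.
  intros Hl. unfold C3.
  rewrite (is_lim_seq_unique (C3_partial x) (exp l)); [reflexivity|].
  apply (is_lim_seq_ext (fun N => exp (psum (ln_C3_term x) N))).
  { intros N. symmetry. apply C3_partial_eq. }
  apply is_lim_seq_continuous; [|exact Hl].
  apply derivable_continuous_pt, derivable_pt_exp.
Qed.

(* Termwise: [d/dt (a^2 ln (1 - t^2/a^2) + t^2) = - t^2 * 8t / ((2a)^2 - 4t^2)]. *)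
Lemma is_RInt_tan_pf_term x k : 0 <= x <= 1/4 ->
  is_RInt (fun t => t ^ 2 * tan_pf_term t k) 0 x (- ln_C3_term x k).
Proof.
  intros Hx. set (a := half_odd k). pose proof (half_odd_ge k) as Ha. fold a in Ha.
  assert (Hlog : forall t, 0 <= t <= x -> 0 < 1 - t ^ 2 / a ^ 2).
  { intros t Ht. assert (t ^ 2 < a ^ 2) by (simpl; nra).
    assert (t ^ 2 / a ^ 2 < 1) by (apply Rlt_div_l; nra). lra. }
  set (F := fun t => - (a ^ 2 * ln (1 - t ^ 2 / a ^ 2) + t ^ 2)).
  replace (- ln_C3_term x k) with (minus (F x) (F 0)).
  2: { unfold F, ln_C3_term, minus, plus, opp. simpl. fold a.
       replace (1 - 0 * (0 * 1) / (a * (a * 1))) with 1 by (field; lra). rewrite ln_1. ring. }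
  apply (is_RInt_ext (V := R_NormedModule) (fun t => t ^ 2 * (8 * t / ((2 * a) ^ 2 - 4 * t ^ 2)))).
  { intros t _. unfold tan_pf_term, a. rewrite half_odd_eq. do 3 f_equal. field. }
  apply (is_RInt_derive (V := R_CompleteNormedModule)).
  - intros t Ht. rewrite Rmin_left, Rmax_right in Ht by lra.
    specialize (Hlog t Ht). unfold F. auto_derive.
    + simpl in Hlog. lra.
    + simpl in *. field. repeat split; nra.
  - intros t Ht. rewrite Rmin_left, Rmax_right in Ht by lra.
    apply (ex_derive_continuous (K := R_AbsRing) (V := R_NormedModule)).
    auto_derive. nra.
Qed.

Lemma tan_pf_term_bounded t : 0 <= t <= 1/4 -> bounded_by_inv_sq 8 (tan_pf_term t).
Proof.
  intros Ht k. pose proof (pos_INR k) as HK. unfold tan_pf_term.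
  set (K := INR k) in *.
  assert (HD : 4 * K * K + 4 * K + 3/4 <= (2 * K + 1) ^ 2 - 4 * t ^ 2) by (simpl; nra).
  apply Rabs_div_mult_le; [nra|].
  rewrite Rabs_pos_eq by lra. nra.
Qed.

Definition tan_moment (x : R) : R := RInt (fun t => t ^ 2 * (PI * tan (PI * t))) 0 x.

Lemma is_RInt_tan_moment x : 0 <= x <= 1/4 ->
  is_RInt (fun t => t ^ 2 * (PI * tan (PI * t))) 0 x (tan_moment x).
Proof.
  intros Hx. apply (RInt_correct (V := R_CompleteNormedModule)).
  apply (ex_RInt_continuous (V := R_CompleteNormedModule)).
  intros t Ht. rewrite Rmin_left, Rmax_right in Ht by lra.
  apply (ex_derive_continuous (K := R_AbsRing) (V := R_NormedModule)).
  unfold tan. auto_derive. pose proof (cos_PI_mult_pos t ltac:(lra)). lra.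
Qed.

Lemma is_RInt_psum_tan_pf x N : 0 <= x <= 1/4 ->
  is_RInt (fun t => t ^ 2 * psum (tan_pf_term t) N) 0 x (- psum (ln_C3_term x) N).
Proof.
  intros Hx. rewrite <- psum_opp.
  apply (is_RInt_ext (V := R_NormedModule) (fun t => psum (fun k => t ^ 2 * tan_pf_term t k) N)).
  { intros t _. apply psum_scal. }
  apply is_RInt_psum. intros k. apply is_RInt_tan_pf_term, Hx.
Qed.

Lemma tan_moment_sub_psum_le x N : 0 <= x <= 1/4 ->
  Rabs (- tan_moment x - psum (ln_C3_term x) N) <= (1/8) / (INR N + 1).
Proof.
  intros Hx. pose proof (INR_succ_pos N).
  pose proof (is_RInt_minus _ _ _ _ _ _ (is_RInt_tan_moment x Hx) (is_RInt_psum_tan_pf x N Hx)) as HI.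
  assert (Hn : norm (minus (tan_moment x) (- psum (ln_C3_term x) N))
               <= (x - 0) * (/ 16 * (8 / (INR N + 1)))).
  { refine (norm_RInt_le_const (V := R_NormedModule) _ 0 x _ _ ltac:(lra) _ HI).
    intros t Ht. unfold minus, plus, opp, norm. simpl. unfold abs. simpl.
    match goal with |- Rabs ?e <= _ =>
      replace e with (t ^ 2 * (PI * tan (PI * t) - psum (tan_pf_term t) N)) by (simpl; ring) end.
    rewrite Rabs_mult, (Rabs_pos_eq (t ^ 2)) by apply pow2_ge_0.
    apply Rmult_le_compat; [apply pow2_ge_0 | apply Rabs_pos | simpl; nra |].
    apply (psum_tail_bounded_by_inv_sq 8); [apply tan_pf_term_bounded; lra|].
    apply is_lim_seq_tan_pf. lra. }
  unfold minus, plus, opp, norm in Hn. simpl in Hn. unfold abs in Hn. simpl in Hn.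
  rewrite <- Rabs_Ropp. replace (- (- tan_moment x - psum (ln_C3_term x) N))
    with (tan_moment x + - - psum (ln_C3_term x) N) by ring.
  eapply Rle_trans; [exact Hn|].
  pose proof (Rinv_0_lt_compat _ H). unfold Rdiv. nra.
Qed.

Lemma C3_eq_exp_tan_moment x : 0 <= x <= 1/4 -> C3 x = exp (- tan_moment x).
Proof.
  intros Hx. apply C3_eq_exp, (is_lim_seq_of_dist_le _ _ (1/8)).
  intros N. apply tan_moment_sub_psum_le, Hx.
Qed.

(** * The Fourier expansion of [tan] under the integral *)

Lemma continuous_continuity_pt (f : R -> R) x : continuity_pt f x -> continuous f x.
Proof. apply continuity_pt_filterlim. Qed.

Lemma Rabs_mul_cos_div_le g y m M : 0 < m -> Rabs g <= M -> Rabs (g * cos y / m) <= M / m.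
Proof.
  intros Hm Hg. unfold Rdiv.
  rewrite Rabs_mult, Rabs_mult, (Rabs_pos_eq (/ m)) by (apply Rlt_le, Rinv_0_lt_compat, Hm).
  apply Rmult_le_compat_r; [apply Rlt_le, Rinv_0_lt_compat, Hm|].
  rewrite <- (Rmult_1_r M). apply Rmult_le_compat; try apply Rabs_pos; [exact Hg|].
  apply Rabs_le, COS_bound.
Qed.

(* One integration by parts against [sin (m t)]. *)
Lemma RInt_mul_sin_bound (f df : R -> R) a b m M0 M1 :
  a <= b -> 0 < m ->
  (forall t, a <= t <= b -> is_derive f t (df t)) ->
  (forall t, a <= t <= b -> continuity_pt df t) ->
  Rabs (f a) <= M0 -> Rabs (f b) <= M0 ->
  (forall t, a <= t <= b -> Rabs (df t) <= M1) ->
  exists v, is_RInt (fun t => f t * sin (m * t)) a b v /\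
            Rabs v <= (2 * M0 + (b - a) * M1) / m.
Proof.
  intros Hab Hm Hf Hdf Ha Hb HM1.
  assert (Hfc : forall t, a <= t <= b -> continuity_pt f t).
  { intros t Ht. apply ex_derive_continuity_pt. eexists. apply Hf, Ht. }
  assert (Hsin : forall t, continuity_pt (fun t => sin (m * t)) t).
  { intros t. apply ex_derive_continuity_pt. auto_derive. auto. }
  set (G := fun t => - f t * cos (m * t) / m).
  set (h := fun t => df t * cos (m * t) / m).
  assert (Hhc : forall t, a <= t <= b -> continuity_pt h t).
  { intros t Ht. unfold h.
    apply (continuity_pt_ext (fun t => / m * (df t * cos (m * t)))); [intros; field; lra|].
    apply continuity_pt_scal, continuity_pt_mult; [apply Hdf, Ht|].
    apply ex_derive_continuity_pt. auto_derive. auto. }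
  assert (HG : is_RInt (fun t => f t * sin (m * t) - h t) a b (minus (G b) (G a))).
  { apply (is_RInt_derive (V := R_CompleteNormedModule)).
    - intros t Ht. rewrite Rmin_left, Rmax_right in Ht by lra.
      unfold G, h. auto_derive; [exists (df t); apply Hf, Ht | ].
      replace (Derive (fun x => f x) t) with (df t)
        by (symmetry; apply is_derive_unique, Hf, Ht).
      field. lra.
    - intros t Ht. rewrite Rmin_left, Rmax_right in Ht by lra.
      apply continuous_continuity_pt, continuity_pt_minus; [|apply Hhc, Ht].
      apply continuity_pt_mult; [apply Hfc, Ht | apply Hsin]. }
  assert (Hh : ex_RInt h a b).
  { apply (ex_RInt_continuous (V := R_CompleteNormedModule)).
    intros t Ht. rewrite Rmin_left, Rmax_right in Ht by lra.
    apply continuous_continuity_pt, Hhc, Ht. }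
  assert (Hhb : Rabs (RInt h a b) <= (b - a) * (M1 / m)).
  { apply (norm_RInt_le_const (V := R_NormedModule) h a b); [exact Hab| |].
    - intros t Ht. apply Rabs_mul_cos_div_le; [exact Hm | apply HM1, Ht].
    - apply (RInt_correct (V := R_CompleteNormedModule)), Hh. }
  exists (minus (G b) (G a) + RInt h a b). split.
  - apply (is_RInt_ext (V := R_NormedModule) (fun t => plus (f t * sin (m * t) - h t) (h t))).
    { intros t _. unfold plus. simpl. ring. }
    apply (is_RInt_plus (V := R_NormedModule)); [exact HG|].
    apply (RInt_correct (V := R_CompleteNormedModule)), Hh.
  - assert (HGx : forall x, Rabs (f x) <= M0 -> Rabs (G x) <= M0 / m).
    { intros x Hx. apply Rabs_mul_cos_div_le; [exact Hm | rewrite Rabs_Ropp; exact Hx]. }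
    pose proof (HGx a Ha). pose proof (HGx b Hb).
    unfold minus, plus, opp. simpl.
    replace ((2 * M0 + (b - a) * M1) / m) with (M0 / m + M0 / m + (b - a) * (M1 / m))
      by (field; lra).
    eapply Rle_trans; [apply Rabs_triang|].
    apply Rplus_le_compat; [|exact Hhb].
    eapply Rle_trans; [apply Rabs_triang|]. rewrite Rabs_Ropp. lra.
Qed.

Lemma cos_mul_psum_alt_sin x N :
  cos x * psum (fun k => (-1) ^ k * 2 * sin (2 * (INR k + 1) * x)) N
  = sin x - (-1) ^ N * sin ((2 * INR N + 1) * x).
Proof.
  induction N as [|N IH].
  - simpl. replace ((2 * 0 + 1) * x) with x by ring. ring.
  - rewrite psum_S, Rmult_plus_distr_l, IH, S_INR.
    set (A := 2 * (INR N + 1) * x).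
    replace ((2 * (INR N + 1) + 1) * x) with (A + x) by (unfold A; ring).
    replace ((2 * INR N + 1) * x) with (A - x) by (unfold A; ring).
    rewrite sin_plus, sin_minus. simpl. ring.
Qed.

Definition freq (k : nat) : R := 2 * (INR k + 1) * PI.

Definition tan_fourier_term (t : R) (k : nat) : R :=
  t ^ 2 * (PI * ((-1) ^ k * 2 * sin (freq k * t))).

Definition t2_secPI (t : R) : R := PI * t ^ 2 / cos (PI * t).

Definition t2_secPI_deriv (t : R) : R :=
  PI * (2 * t * cos (PI * t) + PI * t ^ 2 * sin (PI * t)) / cos (PI * t) ^ 2.

Lemma tan_moment_integrand_split t N : 0 <= t <= 1/4 ->
  t ^ 2 * (PI * tan (PI * t)) = psum (tan_fourier_term t) N
    + (-1) ^ N * (t2_secPI t * sin ((2 * INR N + 1) * PI * t)).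
Proof.
  intros Ht. pose proof (cos_PI_mult_pos t Ht) as Hc.
  pose proof (cos_mul_psum_alt_sin (PI * t) N) as E.
  unfold tan_fourier_term, t2_secPI, tan.
  rewrite (psum_ext _ (fun k => t ^ 2 * PI * ((-1) ^ k * 2 * sin (2 * (INR k + 1) * (PI * t))))).
  2: { intros k _. unfold freq.
       replace (2 * (INR k + 1) * PI * t) with (2 * (INR k + 1) * (PI * t)) by ring. ring. }
  rewrite psum_scal.
  replace ((2 * INR N + 1) * PI * t) with ((2 * INR N + 1) * (PI * t)) by ring.
  set (S := psum _ N) in *.
  replace S with ((sin (PI * t) - (-1) ^ N * sin ((2 * INR N + 1) * (PI * t))) / cos (PI * t))
    by (rewrite <- E; field; lra).
  field. lra.
Qed.

Definition tan_fourier_coef (k : nat) : R :=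
  let c := freq k in
  PI * (-1) ^ k * 2 * (- (1/16) * cos (c * (1/4)) / c + (1/2) * sin (c * (1/4)) / c ^ 2
                       + 2 * cos (c * (1/4)) / c ^ 3 - 2 / c ^ 3).

Lemma freq_pos k : 0 < freq k.
Proof. unfold freq. pose proof (pos_INR k). pose proof PI_gt_3. nra. Qed.

Lemma is_RInt_tan_fourier_term k :
  is_RInt (fun t => tan_fourier_term t k) 0 (1/4) (tan_fourier_coef k).
Proof.
  pose proof (freq_pos k) as Hc. set (c := freq k) in *.
  set (F := fun t => PI * (-1) ^ k * 2 *
    (- t ^ 2 * cos (c * t) / c + 2 * t * sin (c * t) / c ^ 2 + 2 * cos (c * t) / c ^ 3)).
  replace (tan_fourier_coef k) with (minus (F (1/4)) (F 0)).
  2: { unfold F, tan_fourier_coef, minus, plus, opp. simpl. fold c.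
       rewrite Rmult_0_r, cos_0, sin_0. R_eq. field. lra. }
  apply (is_RInt_derive (V := R_CompleteNormedModule)).
  - intros t _. unfold F, tan_fourier_term. fold c. auto_derive; [auto|]. R_eq. field. lra.
  - intros t _. apply (ex_derive_continuous (K := R_AbsRing) (V := R_NormedModule)).
    unfold tan_fourier_term. auto_derive. auto.
Qed.

Lemma cos_sqr_PI_mult_ge t : 0 <= t <= 1/4 -> 1/2 <= cos (PI * t) ^ 2.
Proof.
  intros Ht. pose proof PI_gt_3.
  assert (Hcos : cos (PI / 4) <= cos (PI * t)) by (apply cos_decr_1; nra).
  rewrite cos_PI4 in Hcos.
  assert (Hs2 : 0 < sqrt 2) by (apply sqrt_lt_R0; lra).
  assert (Hsq : (1 / sqrt 2) ^ 2 = 1/2).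
  { replace ((1 / sqrt 2) ^ 2) with (1 / (sqrt 2 * sqrt 2)) by (field; lra).
    rewrite sqrt_sqrt by lra. reflexivity. }
  assert (0 < 1 / sqrt 2) by (apply Rdiv_lt_0_compat; lra).
  rewrite <- Hsq. apply pow_incr. lra.
Qed.

Lemma is_derive_t2_secPI t : 0 <= t <= 1/4 -> is_derive t2_secPI t (t2_secPI_deriv t).
Proof.
  intros Ht. pose proof (cos_PI_mult_pos t Ht).
  unfold t2_secPI, t2_secPI_deriv. auto_derive; [lra|]. R_eq. field. lra.
Qed.

Lemma continuity_pt_t2_secPI_deriv t : 0 <= t <= 1/4 -> continuity_pt t2_secPI_deriv t.
Proof.
  intros Ht. pose proof (cos_PI_mult_pos t Ht).
  apply ex_derive_continuity_pt. unfold t2_secPI_deriv. auto_derive.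
  repeat split; apply Rgt_not_eq; nra.
Qed.

Lemma t2_secPI_deriv_bound t : 0 <= t <= 1/4 -> Rabs (t2_secPI_deriv t) <= 6.
Proof.
  intros Ht. pose proof (cos_sqr_PI_mult_ge t Ht). pose proof (cos_PI_mult_pos t Ht).
  pose proof PI_gt_3. pose proof PI_4.
  assert (0 <= sin (PI * t)) by (apply sin_ge_0; nra).
  pose proof (SIN_bound (PI * t)). pose proof (COS_bound (PI * t)).
  unfold t2_secPI_deriv. set (c := cos (PI * t)) in *. set (s := sin (PI * t)) in *.
  assert (0 <= t ^ 2 <= 1/16) by (simpl; split; nra).
  assert (0 <= 2 * t * c <= 2 * t) by (split; nra).
  assert (0 <= PI * t ^ 2 <= 1/4) by (split; nra).
  assert (0 <= PI * t ^ 2 * s <= 1/4) by (split; nra).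
  assert (0 <= 2 * t * c + PI * t ^ 2 * s <= 3/4) by lra.
  rewrite Rabs_pos_eq by (apply Rdiv_le_0_compat; [apply Rmult_le_pos|]; lra).
  apply Rle_div_l; [lra|]. nra.
Qed.

Lemma t2_secPI_quarter_bound : Rabs (t2_secPI (1/4)) <= 3/8.
Proof.
  unfold t2_secPI. replace (PI * (1/4)) with (PI / 4) by field. rewrite cos_PI4.
  pose proof PI_gt_3. pose proof PI_4.
  assert (0 < sqrt 2) by (apply sqrt_lt_R0; lra).
  assert (sqrt 2 * sqrt 2 = 2) by (apply sqrt_sqrt; lra).
  replace (PI * (1/4) ^ 2 / (1 / sqrt 2)) with (PI * sqrt 2 / 16) by (field; lra).
  rewrite Rabs_pos_eq by (apply Rdiv_le_0_compat; nra). nra.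
Qed.

Lemma tan_fourier_rem_bound N : exists v,
  is_RInt (fun t => t2_secPI t * sin ((2 * INR N + 1) * PI * t)) 0 (1/4) v /\
  Rabs v <= 1 / (INR N + 1).
Proof.
  set (m := (2 * INR N + 1) * PI). pose proof (pos_INR N). pose proof PI_gt_3.
  assert (Hm : 0 < m) by (unfold m; nra).
  destruct (RInt_mul_sin_bound t2_secPI t2_secPI_deriv 0 (1/4) m (3/8) 6) as [v [Hv Hvb]];
    try lra.
  - exact is_derive_t2_secPI.
  - exact continuity_pt_t2_secPI_deriv.
  - unfold t2_secPI. rewrite Rmult_0_r, cos_0. simpl. rewrite Rmult_0_l, Rmult_0_r.
    unfold Rdiv. rewrite Rmult_0_l, Rabs_R0. lra.
  - exact t2_secPI_quarter_bound.
  - exact t2_secPI_deriv_bound.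
  - exists v. split; [exact Hv|]. eapply Rle_trans; [exact Hvb|].
    apply Rle_div_l; [exact Hm|].
    apply (Rmult_le_reg_r (INR N + 1)); [apply INR_succ_pos|].
    replace (1 / (INR N + 1) * m * (INR N + 1)) with m by (field; lra).
    unfold m. nra.
Qed.

Lemma is_lim_seq_tan_fourier : is_lim_seq (psum tan_fourier_coef) (tan_moment (1/4)).
Proof.
  apply (is_lim_seq_of_dist_le _ _ 1). intros N.
  destruct (tan_fourier_rem_bound N) as [v [Hv Hvb]].
  replace (tan_moment (1/4)) with (psum tan_fourier_coef N + (-1) ^ N * v).
  - replace (psum tan_fourier_coef N + (-1) ^ N * v - psum tan_fourier_coef N)
      with ((-1) ^ N * v) by ring.
    rewrite Rabs_mult, pow_1_abs, Rmult_1_l. exact Hvb.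
  - symmetry. apply (is_RInt_unique (V := R_CompleteNormedModule)).
    apply (is_RInt_ext (V := R_NormedModule) (fun t => plus (psum (tan_fourier_term t) N)
      (scal ((-1) ^ N) (t2_secPI t * sin ((2 * INR N + 1) * PI * t))))).
    + intros t Ht. rewrite Rmin_left, Rmax_right in Ht by lra.
      rewrite (tan_moment_integrand_split t N) by lra. reflexivity.
    + apply (is_RInt_plus (V := R_NormedModule)).
      * apply is_RInt_psum, is_RInt_tan_fourier_term.
      * apply (is_RInt_scal (V := R_NormedModule)), Hv.
Qed.

(** * Summing the Fourier coefficients *)

Definition catalan_pair (j : nat) : R := 1 / (4 * INR j + 1) ^ 2 - 1 / (4 * INR j + 3) ^ 2.
Definition ln2_pair (j : nat) : R := 1 / (4 * INR j + 4) - 1 / (4 * INR j + 2).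
Definition zeta3_triple (j : nat) : R :=
  - 1 / (2 * (4 * INR j + 1) ^ 3) + 1 / (4 * INR j + 2) ^ 3 - 1 / (2 * (4 * INR j + 3) ^ 3).

(* [freq (4j + i) / 4 = (i + 1) PI/2 + 2 j PI], so the coefficients are 4-periodic
   in their trigonometric part. *)
Lemma tan_fourier_coef_block j :
  psum (fun i => tan_fourier_coef (4 * j + i)) 4
  = / (4 * PI) * catalan_pair j + / 16 * ln2_pair j + / PI ^ 2 * zeta3_triple j.
Proof.
  assert (Hcoef : forall i, tan_fourier_coef (4 * j + i) = (-1) ^ i *
    (- cos ((INR i + 1) * (PI / 2)) / (16 * (4 * INR j + (INR i + 1)))
     + sin ((INR i + 1) * (PI / 2)) / (4 * (4 * INR j + (INR i + 1)) ^ 2 * PI)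
     + (cos ((INR i + 1) * (PI / 2)) - 1) / (2 * (4 * INR j + (INR i + 1)) ^ 3 * PI ^ 2))).
  { intros i. pose proof (pos_INR i). pose proof (pos_INR j). pose proof PI_gt_3.
    unfold tan_fourier_coef, freq. cbv zeta.
    replace (2 * (INR (4 * j + i) + 1) * PI * (1/4)) with ((INR i + 1) * (PI / 2) + 2 * INR j * PI)
      by (rewrite plus_INR, mult_INR; simpl; field).
    rewrite cos_period, sin_period, pow_add, pow_mult, plus_INR, mult_INR.
    replace ((-1) ^ 4) with 1 by ring. rewrite pow1. simpl INR. field. lra. }
  cbn [psum]. rewrite !Hcoef. simpl INR. pose proof (pos_INR j). pose proof PI_gt_3.
  replace ((0 + 1) * (PI / 2)) with (PI / 2) by ring.
  replace ((1 + 1) * (PI / 2)) with PI by field.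
  replace ((1 + 1 + 1) * (PI / 2)) with (3 * (PI / 2)) by ring.
  replace ((1 + 1 + 1 + 1) * (PI / 2)) with (2 * PI) by field.
  rewrite cos_PI2, sin_PI2, cos_PI, sin_PI, cos_3PI2, sin_3PI2, cos_2PI, sin_2PI.
  unfold catalan_pair, ln2_pair, zeta3_triple. field. lra.
Qed.

Lemma psum_tan_fourier_coef_mul4 M : psum tan_fourier_coef (4 * M)
  = / (4 * PI) * psum catalan_pair M + / 16 * psum ln2_pair M + / PI ^ 2 * psum zeta3_triple M.
Proof.
  rewrite psum_blocks, <- !psum_scal, <- !psum_plus.
  apply psum_ext. intros j _. apply tan_fourier_coef_block.
Qed.

Lemma pow_neg1_even n : (-1) ^ (2 * n) = 1.
Proof. rewrite pow_mult. replace ((-1) ^ 2) with 1 by ring. apply pow1. Qed.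

Definition catalan_term (n : nat) : R := (-1) ^ n / (INR (2 * n + 1)) ^ 2.

Lemma is_lim_seq_catalan : is_lim_seq (psum catalan_pair) catalan.
Proof.
  assert (Hb : bounded_by_inv_sq 2 catalan_term).
  { intros n. pose proof (pos_INR n). unfold catalan_term.
    rewrite plus_INR, mult_INR. simpl INR.
    apply Rabs_div_mult_le; [nra|]. rewrite pow_1_abs. nra. }
  apply (is_lim_seq_ext (fun M => psum catalan_term (2 * M))).
  - intros M. rewrite psum_blocks. apply psum_ext. intros j _. cbn [psum].
    unfold catalan_term, catalan_pair. rewrite !pow_add, pow_neg1_even. repeat rewrite ?plus_INR, ?mult_INR.
    simpl INR. pose proof (pos_INR j). field. split; lra.
  - apply is_lim_seq_psum_mul; [lia|]. exact (is_lim_seq_psum_bounded_by_inv_sq _ _ Hb).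
Qed.

Definition odd_inv_cube (i : nat) : R := 1 / (2 * INR i + 1) ^ 3.

(* Splitting [zeta3] into odd and even terms: [zeta3 = sum odd + zeta3 / 8]. *)
Lemma is_lim_seq_odd_inv_cube : is_lim_seq (psum odd_inv_cube) (7/8 * zeta3).
Proof.
  assert (Hz : bounded_by_inv_sq 2 (fun n => / INR (S n) ^ 3)).
  { intros n. pose proof (pos_INR n). rewrite S_INR.
    replace (/ (INR n + 1) ^ 3) with (1 / (INR n + 1) ^ 3) by (field; lra).
    apply Rabs_div_mult_le; [apply pow_lt; lra|]. rewrite Rabs_R1. simpl. nra. }
  assert (Hodd : bounded_by_inv_sq 2 odd_inv_cube).
  { intros n. pose proof (pos_INR n). unfold odd_inv_cube.
    apply Rabs_div_mult_le; [apply pow_lt; lra|]. rewrite Rabs_R1. simpl. nra. }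
  pose proof (is_lim_seq_psum_bounded_by_inv_sq _ _ Hz) as Hzeta. fold zeta3 in Hzeta.
  pose proof (is_lim_seq_psum_bounded_by_inv_sq _ _ Hodd) as Hl.
  set (l := Series odd_inv_cube) in Hl.
  enough (zeta3 = l + / 8 * zeta3) by (replace (7/8 * zeta3) with l by lra; exact Hl).
  apply (is_lim_seq_unique_R (fun M => psum (fun n => / INR (S n) ^ 3) (2 * M))).
  - apply is_lim_seq_psum_mul; [lia | exact Hzeta].
  - apply (is_lim_seq_ext (fun M => psum odd_inv_cube M + / 8 * psum (fun n => / INR (S n) ^ 3) M)).
    + intros M. rewrite psum_blocks, <- psum_scal, <- psum_plus. apply psum_ext. intros j _.
      cbn [psum]. unfold odd_inv_cube. rewrite !S_INR. repeat rewrite ?plus_INR, ?mult_INR. simpl INR.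
      pose proof (pos_INR j). field. lra.
    + apply is_lim_seq_plus'; [exact Hl | apply (is_lim_seq_scal_l _ (/ 8) zeta3), Hzeta].
Qed.

Lemma is_lim_seq_zeta3 : is_lim_seq (psum zeta3_triple) (- 21/64 * zeta3).
Proof.
  apply (is_lim_seq_ext (fun M => - / 2 * psum odd_inv_cube (2 * M) + / 8 * psum odd_inv_cube M)).
  - intros M. rewrite psum_blocks, <- !psum_scal, <- psum_plus. apply psum_ext. intros j _.
    cbn [psum]. unfold odd_inv_cube, zeta3_triple. rewrite !plus_INR, !mult_INR. simpl INR.
    pose proof (pos_INR j). field. lra.
  - replace (- 21/64 * zeta3) with (- / 2 * (7/8 * zeta3) + / 8 * (7/8 * zeta3)) by field.
    apply is_lim_seq_plus'.
    + apply (is_lim_seq_scal_l _ (- / 2) (7/8 * zeta3)), is_lim_seq_psum_mul; [lia|].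
      apply is_lim_seq_odd_inv_cube.
    + apply (is_lim_seq_scal_l _ (/ 8) (7/8 * zeta3)), is_lim_seq_odd_inv_cube.
Qed.

Lemma is_RInt_scal_pow n c : is_RInt (fun x => c * x ^ n) 0 1 (c / (INR n + 1)).
Proof.
  pose proof (INR_succ_pos n).
  set (F := fun x => c * x ^ S n / (INR n + 1)).
  replace (c / (INR n + 1)) with (minus (F 1) (F 0)).
  2: { unfold F, minus, plus, opp. simpl. rewrite pow1. R_eq. field. lra. }
  apply (is_RInt_derive (V := R_CompleteNormedModule)).
  - intros x _. unfold F. auto_derive; [auto|].
    change (match n with 0%nat => 1 | S _ => INR n + 1 end) with (INR (S n)).
    rewrite S_INR. R_eq. field. lra.
  - intros x _. apply (ex_derive_continuous (K := R_AbsRing) (V := R_NormedModule)).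
    auto_derive. auto.
Qed.

Lemma is_RInt_ln2 : is_RInt (fun x => / (1 + x)) 0 1 (ln 2).
Proof.
  replace (ln 2) with (minus (ln (1 + 1)) (ln (1 + 0))).
  2: { unfold minus, plus, opp. simpl. rewrite Rplus_0_r, ln_1. R_eq.
       replace (1 + 1) with 2 by ring. ring. }
  apply (is_RInt_derive (V := R_CompleteNormedModule) (fun x => ln (1 + x))).
  - intros x Hx. rewrite Rmin_left, Rmax_right in Hx by lra.
    auto_derive; [lra|]. R_eq. field. lra.
  - intros x Hx. rewrite Rmin_left, Rmax_right in Hx by lra.
    apply (ex_derive_continuous (K := R_AbsRing) (V := R_NormedModule)). auto_derive. lra.
Qed.

Lemma psum_alt_geom x n : 0 <= x ->
  psum (fun i => (-1) ^ i * x ^ i) n = (1 - (-1) ^ n * x ^ n) / (1 + x).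
Proof.
  intros Hx. induction n as [|n IH]; [simpl; field; lra|].
  rewrite psum_S, IH. simpl. field. lra.
Qed.

Definition alt_harmonic_term (i : nat) : R := (-1) ^ i / (INR i + 1).

Lemma ln2_sub_psum_alt_harmonic_le n :
  Rabs (ln 2 - psum alt_harmonic_term n) <= 1 / (INR n + 1).
Proof.
  assert (Hpsum : is_RInt (fun x => psum (fun i => (-1) ^ i * x ^ i) n) 0 1
                    (psum alt_harmonic_term n))
    by (apply is_RInt_psum; intros i; apply is_RInt_scal_pow).
  pose proof (is_RInt_minus _ _ _ _ _ _ is_RInt_ln2 Hpsum) as HI.
  assert (Hpow : is_RInt (fun x => x ^ n) 0 1 (1 / (INR n + 1))).
  { apply (is_RInt_ext (V := R_NormedModule) (fun x => 1 * x ^ n)); [intros; R_eq; ring|].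
    apply is_RInt_scal_pow. }
  refine (norm_RInt_le (V := R_NormedModule) _ (fun x => x ^ n) 0 1 _ _ ltac:(lra) _ HI Hpow).
  intros x Hx. unfold minus, plus, opp, norm. simpl. unfold abs. simpl.
  rewrite psum_alt_geom by lra.
  replace (/ (1 + x) + - ((1 - (-1) ^ n * x ^ n) / (1 + x))) with ((-1) ^ n * x ^ n / (1 + x))
    by (field; lra).
  assert (0 <= x ^ n) by (apply pow_le; lra).
  unfold Rdiv. rewrite !Rabs_mult, pow_1_abs, Rmult_1_l, Rabs_pos_eq by lra.
  rewrite Rabs_pos_eq by (apply Rlt_le, Rinv_0_lt_compat; lra).
  assert (/ (1 + x) <= 1) by (rewrite <- Rinv_1; apply Rinv_le_contravar; lra).
  nra.
Qed.

Lemma is_lim_seq_ln2 : is_lim_seq (psum ln2_pair) (- / 2 * ln 2).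
Proof.
  apply (is_lim_seq_ext (fun M => - / 2 * psum alt_harmonic_term (2 * M))).
  - intros M. rewrite psum_blocks, <- psum_scal. apply psum_ext. intros j _. cbn [psum].
    unfold alt_harmonic_term, ln2_pair. rewrite !pow_add, pow_neg1_even.
    repeat rewrite ?plus_INR, ?mult_INR. simpl INR. pose proof (pos_INR j). field. lra.
  - apply (is_lim_seq_scal_l _ (- / 2) (ln 2)), is_lim_seq_psum_mul; [lia|].
    apply (is_lim_seq_of_dist_le _ _ 1), ln2_sub_psum_alt_harmonic_le.
Qed.

Lemma tan_moment_quarter :
  tan_moment (1/4) = / (4 * PI) * catalan + / 16 * (- / 2 * ln 2) + / PI ^ 2 * (- 21/64 * zeta3).
Proof.
  apply (is_lim_seq_unique_R (fun M => psum tan_fourier_coef (4 * M))).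
  - apply is_lim_seq_psum_mul; [lia | exact is_lim_seq_tan_fourier].
  - apply (is_lim_seq_ext _ _ _ (fun M => eq_sym (psum_tan_fourier_coef_mul4 M))).
    apply is_lim_seq_plus'; [apply is_lim_seq_plus'|].
    + apply (is_lim_seq_scal_l _ _ catalan), is_lim_seq_catalan.
    + apply (is_lim_seq_scal_l _ _ (- / 2 * ln 2)), is_lim_seq_ln2.
    + apply (is_lim_seq_scal_l _ _ (- 21/64 * zeta3)), is_lim_seq_zeta3.
Qed.

Lemma ln_sqrt2 : ln (sqrt 2) = ln 2 / 2.
Proof.
  assert (0 < sqrt 2) by (apply sqrt_lt_R0; lra).
  assert (ln 2 = ln (sqrt 2) + ln (sqrt 2))
    by (rewrite <- ln_mult, sqrt_sqrt by lra; reflexivity).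
  lra.
Qed.

Lemma exp_pow x n : exp x ^ n = exp (INR n * x).
Proof.
  induction n as [|n IH]; [simpl; rewrite Rmult_0_l, exp_0; reflexivity|].
  rewrite S_INR. simpl. rewrite IH, <- exp_plus. f_equal. ring.
Qed.

Theorem corollary2p7 :
  zeta3 = 4 * PI ^ 2 / 21 * ln (exp (4 * catalan / PI) * (C3 (1 / 4)) ^ 16 / sqrt 2).
Proof.
  assert (Hsqrt2 : 0 < sqrt 2) by (apply sqrt_lt_R0; lra).
  rewrite C3_eq_exp_tan_moment, exp_pow, <- exp_plus by lra.
  rewrite ln_div, ln_exp, ln_sqrt2 by (apply exp_pos || exact Hsqrt2).
  rewrite tan_moment_quarter. pose proof PI_gt_3. simpl INR. field. lra.
Qed.
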